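(* Let $n\ge 4$, $t\ge 1$, and $l_1,\dots,l_t\ge 1$ be integers, and put $n'=\sum_{i=1}^{t}(l_i-1)$; assume $n-n'\ge 3$. Then the chordless cycle $C_n$ has an IP-SEG representation with exactly $t$ interval arcs, of lengths $l_1,\dots,l_t$, if and only if $C_{n-n'}$ has an IP-SEG representation with exactly $t$ interval arcs, each of length $1$.
   Context: Let $L_1$ and $L_2$ be two distinct parallel horizontal lines in the plane. A closed straight line segment is an interval segment if both of its endpoints lie on the same line $L_i$, and a permutation segment if one endpoint lies on $L_1$ and the other on $L_2$. An IP-SEG model is a finite family of interval and permutation segments; its intersection graph has one vertex per segment, adjacent iff the segments intersect. For $m\ge 3$, $C_m$ is the chordless cycle on $v_1,\dots,v_m$ with $v_i$ adjacent to $v_{i+1}$ (indices mod $m$) and no other edges. An IP-SEG representation of $C_m$ is an IP-SEG model with segments $s(v_1),\dots,s(v_m)$ whose intersection graph is $C_m$ with $s(v_i)$ corresponding to $v_i$. If such a representation contains both interval and permutation segments, an interval arc is a maximal sequence $s(v_i),s(v_{i+1}),\dots,s(v_j)$ of cyclically consecutive segments that are all interval segments (so $s(v_{i-1})$ and $s(v_{j+1})$ are permutation segments, indices mod $m$); its length is the number of segments in it. Permutation arcs are defined analogously. *)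

From Stdlib Require Import Reals Lra Lia Arith List Permutation.
Open Scope R_scope.

(* The two parallel horizontal lines are fixed (WLOG) as
   L1 = {y = 0} and L2 = {y = 1}. *)
Definition point := (R * R)%type.

Record segment := mkSeg { ep1 : point; ep2 : point }.

Definition on_seg (s : segment) (z : point) : Prop :=
  exists lam : R, 0 <= lam <= 1 /\
    fst z = fst (ep1 s) + lam * (fst (ep2 s) - fst (ep1 s)) /\
    snd z = snd (ep1 s) + lam * (snd (ep2 s) - snd (ep1 s)).

Definition on_L1 (p : point) : Prop := snd p = 0.
Definition on_L2 (p : point) : Prop := snd p = 1.

Definition nondegenerate (s : segment) : Prop := ep1 s <> ep2 s.

Definition interval_seg (s : segment) : Prop :=
  nondegenerate s /\
  ((on_L1 (ep1 s) /\ on_L1 (ep2 s)) \/ (on_L2 (ep1 s) /\ on_L2 (ep2 s))).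

Definition permutation_seg (s : segment) : Prop :=
  (on_L1 (ep1 s) /\ on_L2 (ep2 s)) \/ (on_L2 (ep1 s) /\ on_L1 (ep2 s)).

Definition ip_seg (s : segment) : Prop := interval_seg s \/ permutation_seg s.

Definition seg_intersect (s1 s2 : segment) : Prop :=
  exists z : point, on_seg s1 z /\ on_seg s2 z.

(* Adjacency in the chordless cycle C_m on vertices 0,...,m-1
   (v_{i+1} of the paper is vertex i here). *)
Definition cycle_adj (m i j : nat) : Prop :=
  j = ((i + 1) mod m)%nat \/ i = ((j + 1) mod m)%nat.

(* s : nat -> segment (only indices < m matter) is an IP-SEG representation
   of C_m: every segment is an interval or permutation segment and, for
   distinct vertices, segments intersect iff the vertices are adjacent. *)
Definition ipseg_rep (m : nat) (s : nat -> segment) : Prop :=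
  (forall i, (i < m)%nat -> ip_seg (s i)) /\
  (forall i j, (i < m)%nat -> (j < m)%nat -> i <> j ->
     (seg_intersect (s i) (s j) <-> cycle_adj m i j)).

Definition mixed_rep (m : nat) (s : nat -> segment) : Prop :=
  (exists i, (i < m)%nat /\ interval_seg (s i)) /\
  (exists j, (j < m)%nat /\ permutation_seg (s j)).

Definition arc_start (m : nat) (s : nat -> segment) (i : nat) : Prop :=
  (i < m)%nat /\ interval_seg (s i) /\
  ~ interval_seg (s ((i + m - 1) mod m)%nat).

Definition arc_length (m : nat) (s : nat -> segment) (i k : nat) : Prop :=
  (forall j, (j < k)%nat -> interval_seg (s ((i + j) mod m)%nat)) /\
  ~ interval_seg (s ((i + k) mod m)%nat).

Definition interval_arcs (m : nat) (s : nat -> segment) (ls : list nat) : Prop :=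
  mixed_rep m s /\
  exists starts lens : list nat,
    NoDup starts /\
    (forall i, In i starts <-> arc_start m s i) /\
    Forall2 (arc_length m s) starts lens /\
    Permutation lens ls.

Definition has_rep_with_arcs (m : nat) (ls : list nat) : Prop :=
  exists s : nat -> segment, ipseg_rep m s /\ interval_arcs m s ls.

Definition n_prime (ls : list nat) : nat :=
  fold_right (fun l acc => (l - 1 + acc)%nat) 0%nat ls.

(** An arc of length >= 2 starts with two overlapping collinear
    interval segments; merging them gives a representation of a cycle with one
    vertex less, whose arcs are unchanged except that this arc is one shorter.
    Conversely, the first segment of an arc is an interval that meets its two
    neighbours, which are disjoint when the cycle has >= 4 vertices; cutting it
    at a point between the two traces of the neighbours lengthens the arc by one
    (for C_3 an explicit representation of C_4 is used).  Iterating n' times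
    gives the theorem. *)

From Stdlib Require Import Reals Lra Lia List Permutation ClassicalEpsilon.
Open Scope R_scope.

Definition hseg (h a b : R) : segment := mkSeg (a, h) (b, h).

Lemma on_seg_horizontal (s : segment) (h : R) :
  snd (ep1 s) = h -> snd (ep2 s) = h -> forall z,
  on_seg s z <->
  snd z = h /\ Rmin (fst (ep1 s)) (fst (ep2 s)) <= fst z <= Rmax (fst (ep1 s)) (fst (ep2 s)).
Proof.
  destruct s as [[x1 y1] [x2 y2]]; intros H1 H2 [zx zy]; simpl in *; subst.
  unfold on_seg; simpl; split.
  - intros [lam [[H0 H1] [Hx Hy]]].
    replace (lam * (h - h)) with 0 in Hy by ring.
    split; [lra|]. unfold Rmin, Rmax; destruct (Rle_dec x1 x2); split; nra.
  - intros [Hy Hb]. destruct (Req_dec x1 x2) as [E|E].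
    + subst x1. exists 0.
      unfold Rmin, Rmax in Hb; destruct (Rle_dec x2 x2); (split; [lra|split; lra]).
    + exists ((zx - x1) / (x2 - x1)).
      assert (Hl : (zx - x1) / (x2 - x1) * (x2 - x1) = zx - x1) by (field; lra).
      set (lam := (zx - x1) / (x2 - x1)) in *.
      unfold Rmin, Rmax in Hb; destruct (Rle_dec x1 x2).
      * assert (x1 < x2) by lra. split; [split; nra|split; lra].
      * assert (x2 < x1) by lra. split; [split; nra|split; lra].
Qed.

Lemma on_hseg (h a b : R) (z : point) :
  a <= b -> on_seg (hseg h a b) z <-> snd z = h /\ a <= fst z <= b.
Proof.
  intros Hab. rewrite (on_seg_horizontal (hseg h a b) h eq_refl eq_refl z). simpl.
  rewrite Rmin_left, Rmax_right by lra. tauto.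
Qed.

Lemma interval_hseg (h a b : R) : h = 0 \/ h = 1 -> a < b -> interval_seg (hseg h a b).
Proof.
  intros Hh Hab. split.
  - unfold nondegenerate; simpl. intro E. inversion E. lra.
  - unfold on_L1, on_L2; simpl. destruct Hh; [left|right]; auto.
Qed.

Lemma permutation_not_interval (s : segment) : permutation_seg s -> ~ interval_seg s.
Proof. intros Hp [_ Hi]. unfold permutation_seg, on_L1, on_L2 in *. lra. Qed.

Lemma seg_intersect_comm (s1 s2 : segment) : seg_intersect s1 s2 <-> seg_intersect s2 s1.
Proof. split; intros [z [H1 H2]]; exists z; auto. Qed.

Lemma interval_seg_shape (s : segment) : interval_seg s ->
  exists h a b, (h = 0 \/ h = 1) /\ a < b /\
    forall z, on_seg s z <-> snd z = h /\ a <= fst z <= b.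
Proof.
  intros [Hnd Hl].
  assert (exists h, (h = 0 \/ h = 1) /\ snd (ep1 s) = h /\ snd (ep2 s) = h)
    as [h [Hh [E1 E2]]].
  { unfold on_L1, on_L2 in Hl. destruct Hl as [[A B]|[A B]]; eauto. }
  exists h, (Rmin (fst (ep1 s)) (fst (ep2 s))), (Rmax (fst (ep1 s)) (fst (ep2 s))).
  split; [auto|split; [|apply on_seg_horizontal; auto]].
  unfold nondegenerate in Hnd. destruct s as [[x1 y1] [x2 y2]]; simpl in *; subst.
  unfold Rmin, Rmax; destruct (Rle_dec x1 x2); [|lra].
  destruct (Req_dec x1 x2); [subst; contradiction|lra].
Qed.

Lemma permutation_seg_trace (s : segment) (h : R) : permutation_seg s -> 0 <= h <= 1 ->
  exists x, forall z, snd z = h -> on_seg s z <-> fst z = x.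
Proof.
  destruct s as [[x1 y1] [x2 y2]]; intros Hp Hh.
  unfold permutation_seg, on_L1, on_L2 in Hp; simpl in Hp. unfold on_seg; simpl.
  destruct Hp as [[A B]|[A B]]; subst.
  - exists (x1 + h * (x2 - x1)). intros [zx zy] Hz; simpl in *; subst h. split.
    + intros [lam [_ [Hx Hy]]]. assert (lam = zy) by lra. subst. lra.
    + intros Hx. exists zy. split; [lra|split; lra].
  - exists (x1 + (1 - h) * (x2 - x1)). intros [zx zy] Hz; simpl in *; subst h. split.
    + intros [lam [_ [Hx Hy]]]. assert (lam = 1 - zy) by lra. subst. lra.
    + intros Hx. exists (1 - zy). split; [lra|split; lra].
Qed.

Lemma ip_seg_trace (s : segment) (h : R) : ip_seg s -> h = 0 \/ h = 1 ->
  (exists a b, a <= b /\ forall z, snd z = h -> on_seg s z <-> a <= fst z <= b) \/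
  (forall z, snd z = h -> ~ on_seg s z).
Proof.
  intros [Hi|Hp] Hh.
  - destruct (interval_seg_shape s Hi) as [h' [a [b [Hh' [Hab Hd]]]]].
    destruct (Req_dec h h') as [E|E].
    + left. exists a, b. split; [lra|]. intros z Hz. rewrite Hd. subst. tauto.
    + right. intros z Hz Hon. apply Hd in Hon. lra.
  - destruct (permutation_seg_trace s h Hp) as [x Hx]; [lra|].
    left. exists x, x. split; [lra|]. intros z Hz. rewrite (Hx z Hz). lra.
Qed.

(** Merging: two intersecting interval segments lie on the same line, and
    their union is again an interval segment. *)
Lemma merge_interval_segs (s0 s1 : segment) :
  interval_seg s0 -> interval_seg s1 -> seg_intersect s0 s1 ->
  exists U, interval_seg U /\ forall z, on_seg U z <-> on_seg s0 z \/ on_seg s1 z.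
Proof.
  intros H0 H1 [z [Z0 Z1]].
  destruct (interval_seg_shape s0 H0) as [h0 [a0 [b0 [Hh0 [Hab0 D0]]]]].
  destruct (interval_seg_shape s1 H1) as [h1 [a1 [b1 [Hh1 [Hab1 D1]]]]].
  apply D0 in Z0. apply D1 in Z1.
  exists (hseg h0 (Rmin a0 a1) (Rmax b0 b1)).
  assert (Rmin a0 a1 < Rmax b0 b1)
    by (unfold Rmin, Rmax; destruct (Rle_dec a0 a1), (Rle_dec b0 b1); lra).
  split; [apply interval_hseg; auto|].
  intros w. rewrite on_hseg by lra. rewrite D0, D1.
  unfold Rmin, Rmax; destruct (Rle_dec a0 a1), (Rle_dec b0 b1); split; intros; lra.
Qed.

Lemma cut_interval (I A B : segment) (h lo hi a1 a2 b1 b2 : R) :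
  (h = 0 \/ h = 1) -> lo < hi ->
  (forall z, on_seg I z <-> snd z = h /\ lo <= fst z <= hi) ->
  a1 <= a2 -> (forall z, snd z = h -> on_seg A z <-> a1 <= fst z <= a2) ->
  b1 <= b2 -> (forall z, snd z = h -> on_seg B z <-> b1 <= fst z <= b2) ->
  lo <= a2 -> b1 <= hi -> a2 < b1 ->
  exists L R, interval_seg L /\ interval_seg R /\ seg_intersect L R /\
    (forall z, on_seg L z -> on_seg I z) /\ (forall z, on_seg R z -> on_seg I z) /\
    seg_intersect L A /\ ~ seg_intersect L B /\ seg_intersect R B /\ ~ seg_intersect R A.
Proof.
  intros Hh Hlh HI Ha DA Hb DB Hla Hbh Hab.
  set (w := (Rmax a2 lo + Rmin b1 hi) / 2).
  assert (Hw : lo < w < hi /\ a2 < w < b1)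
    by (unfold w, Rmax, Rmin; destruct (Rle_dec a2 lo), (Rle_dec b1 hi); lra).
  exists (hseg h lo w), (hseg h w hi).
  split; [apply interval_hseg; auto; lra|].
  split; [apply interval_hseg; auto; lra|].
  split; [exists (w, h); rewrite !on_hseg by lra; simpl; lra|].
  split; [intros z; rewrite on_hseg, HI by lra; lra|].
  split; [intros z; rewrite on_hseg, HI by lra; lra|].
  split; [exists (a2, h); rewrite on_hseg, (DA (a2, h) eq_refl) by lra; simpl; lra|].
  split; [intros [z [Z1 Z2]]; rewrite on_hseg in Z1 by lra;
          rewrite (DB z (proj1 Z1)) in Z2; lra|].
  split; [exists (b1, h); rewrite on_hseg, (DB (b1, h) eq_refl) by lra; simpl; lra|].
  intros [z [Z1 Z2]]; rewrite on_hseg in Z1 by lra; rewrite (DA z (proj1 Z1)) in Z2; lra.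
Qed.

Lemma cut_interval_seg (I A B : segment) (h lo hi : R) :
  (h = 0 \/ h = 1) -> lo < hi ->
  (forall z, on_seg I z <-> snd z = h /\ lo <= fst z <= hi) ->
  ip_seg A -> ip_seg B -> seg_intersect I A -> seg_intersect I B -> ~ seg_intersect A B ->
  exists c1 c2, interval_seg c1 /\ interval_seg c2 /\ seg_intersect c1 c2 /\
    (forall z, on_seg c1 z -> on_seg I z) /\ (forall z, on_seg c2 z -> on_seg I z) /\
    seg_intersect c1 B /\ ~ seg_intersect c1 A /\ seg_intersect c2 A /\ ~ seg_intersect c2 B.
Proof.
  intros Hh Hlh HI HA HB IA IB NAB.
  assert (trace : forall S, ip_seg S -> seg_intersect I S -> exists s1 s2,
    s1 <= s2 /\ lo <= s2 /\ s1 <= hi /\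
    forall z, snd z = h -> on_seg S z <-> s1 <= fst z <= s2).
  { intros S HS [z [ZI ZS]]. apply HI in ZI.
    destruct (ip_seg_trace S h HS Hh) as [[s1 [s2 [Hs DS]]]|ES];
      [|exfalso; apply (ES z); tauto].
    apply (DS z (proj1 ZI)) in ZS. exists s1, s2. split; [lra|split; [lra|split; [lra|exact DS]]]. }
  destruct (trace A HA IA) as [a1 [a2 [Ha [Hla [Hah DA]]]]].
  destruct (trace B HB IB) as [b1 [b2 [Hb [Hlb [Hbh DB]]]]].
  assert (Hsep : a2 < b1 \/ b2 < a1).
  { destruct (Rlt_le_dec a2 b1) as [|L1]; [left; auto|].
    destruct (Rlt_le_dec b2 a1) as [|L2]; [right; auto|].
    exfalso. apply NAB. exists (Rmax a1 b1, h).
    split; [apply DA|apply DB]; simpl; auto; unfold Rmax; destruct (Rle_dec a1 b1); lra. }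
  destruct Hsep as [Hab|Hba].
  - destruct (cut_interval I A B h lo hi a1 a2 b1 b2) as [L [R [? [? [? [? [? [? [? [? ?]]]]]]]]]];
      auto.
    exists R, L. rewrite (seg_intersect_comm R L). tauto.
  - destruct (cut_interval I B A h lo hi b1 b2 a1 a2) as [L [R [? [? [? [? [? [? [? [? ?]]]]]]]]]];
      auto.
    exists L, R. tauto.
Qed.

(** The four segments of an IP-SEG representation of C_4 whose only interval
    arc is (c4 0, c4 1): two consecutive intervals on L1 and two crossing
    permutation segments. *)
Definition c4 (j : nat) : segment :=
  match j with
  | 0%nat => hseg 0 0 1
  | 1%nat => hseg 0 1 3
  | 2%nat => mkSeg (3, 0) (1, 1)
  | _ => mkSeg (0, 0) (2, 1)
  end.

Lemma c4_interval : interval_seg (c4 0) /\ interval_seg (c4 1).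
Proof. split; apply interval_hseg; auto; lra. Qed.

Lemma c4_permutation : permutation_seg (c4 2) /\ permutation_seg (c4 3).
Proof. split; left; unfold on_L1, on_L2; simpl; split; reflexivity. Qed.

Open Scope nat_scope.

Lemma succ_mod (m i : nat) : i < m -> (i + 1) mod m = if i + 1 <? m then i + 1 else 0.
Proof.
  intros H. destruct (Nat.ltb_spec (i + 1) m).
  - apply Nat.mod_small; auto.
  - replace (i + 1) with m by lia. apply Nat.Div0.mod_same.
Qed.

Lemma cycle_adj_iff (m i j : nat) : i < m -> j < m ->
  cycle_adj m i j <-> j = S i \/ i = S j \/ (i = m - 1 /\ j = 0) \/ (j = m - 1 /\ i = 0).
Proof.
  intros Hi Hj. unfold cycle_adj. rewrite !succ_mod by auto.
  destruct (Nat.ltb_spec (i + 1) m), (Nat.ltb_spec (j + 1) m); split; intros; lia.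
Qed.

(** The segments c4 represent C_4: consecutive ones meet, opposite ones
    do not (c4 2 meets L1 only at x = 3, c4 3 only at x = 0). *)
Lemma c4_rep : ipseg_rep 4 c4.
Proof.
  destruct c4_interval as [I0 I1]. destruct c4_permutation as [P2 P3].
  assert (M01 : seg_intersect (c4 0) (c4 1))
    by (exists (1, 0)%R; simpl; rewrite !on_hseg by lra; simpl; lra).
  assert (M12 : seg_intersect (c4 1) (c4 2))
    by (exists (3, 0)%R; split; [simpl; rewrite on_hseg by lra; simpl; lra|exists 0%R; simpl; lra]).
  assert (M23 : seg_intersect (c4 2) (c4 3))
    by (exists (3 / 2, 3 / 4)%R; split; exists (3 / 4)%R; simpl; lra).
  assert (M30 : seg_intersect (c4 3) (c4 0))
    by (exists (0, 0)%R; split; [exists 0%R; simpl; lra|simpl; rewrite on_hseg by lra; simpl; lra]).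
  assert (N02 : ~ seg_intersect (c4 0) (c4 2)).
  { intros [z [Z1 [lam [L [Hx Hy]]]]]. simpl in Z1. rewrite on_hseg in Z1 by lra.
    simpl in *. lra. }
  assert (N13 : ~ seg_intersect (c4 1) (c4 3)).
  { intros [z [Z1 [lam [L [Hx Hy]]]]]. simpl in Z1. rewrite on_hseg in Z1 by lra.
    simpl in *. lra. }
  split.
  - intros [|[|[|[|i]]]] Hi; try lia; [left|left|right|right]; auto.
  - intros i j Hi Hj Hij. rewrite cycle_adj_iff by lia.
    destruct i as [|[|[|[|i]]]]; destruct j as [|[|[|[|j]]]]; try lia;
      split; intros H; first [lia | assumption | apply seg_intersect_comm; assumption
                              | contradiction | apply seg_intersect_comm in H; contradiction].
Qed.

Lemma merge_first_two (m : nat) (s : nat -> segment) : 3 <= m -> ipseg_rep (S m) s ->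
  interval_seg (s 0) -> interval_seg (s 1) ->
  exists s', ipseg_rep m s' /\ interval_seg (s' 0) /\ forall j, s' (S j) = s (S (S j)).
Proof.
  intros Hm [Hip Hmeet] I0 I1.
  assert (M01 : seg_intersect (s 0) (s 1)) by (apply Hmeet; try lia; apply cycle_adj_iff; lia).
  destruct (merge_interval_segs _ _ I0 I1 M01) as [U [IU HU]].
  assert (UI : forall x, seg_intersect U x <-> seg_intersect (s 0) x \/ seg_intersect (s 1) x).
  { intros x. split.
    - intros [z [Z1 Z2]]. apply HU in Z1. destruct Z1; [left|right]; exists z; auto.
    - intros [[z [Z1 Z2]]|[z [Z1 Z2]]]; exists z; split; auto; apply HU; auto. }
  exists (fun j => match j with 0 => U | S k => s (S (S k)) end).
  split; [split|split; [auto|reflexivity]].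
  - intros [|k] Hk; [left; auto|]. apply Hip. lia.
  - intros [|i] [|j] Hi Hj Hij; try lia.
    + rewrite UI, Hmeet, Hmeet by lia. rewrite !cycle_adj_iff by lia. lia.
    + rewrite seg_intersect_comm, UI, Hmeet, Hmeet by lia. rewrite !cycle_adj_iff by lia. lia.
    + rewrite Hmeet by lia. rewrite !cycle_adj_iff by lia. lia.
Qed.

Lemma piece_no_meet (c I x : segment) :
  (forall z, on_seg c z -> on_seg I z) -> ~ seg_intersect I x -> ~ seg_intersect c x.
Proof. intros Hc HI [z [Z1 Z2]]. apply HI. exists z; auto. Qed.

(** Expansion: in a representation of C_m (m >= 4) whose first segment is an
    interval, cutting this interval between its two non-adjacent neighbours
    gives a representation of C_(m+1) starting with two intervals. *)
Lemma cut_first (m : nat) (s : nat -> segment) : 4 <= m -> ipseg_rep m s ->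
  interval_seg (s 0) ->
  exists s', ipseg_rep (S m) s' /\ interval_seg (s' 0) /\ interval_seg (s' 1) /\
    forall j, s' (S (S j)) = s (S j).
Proof.
  intros Hm [Hip Hmeet] I0.
  destruct (interval_seg_shape _ I0) as [h [lo [hi [Hh [Hlh DI]]]]].
  assert (Hadj : forall k, S k < m -> seg_intersect (s 0) (s (S k)) <-> S k = 1 \/ S k = m - 1)
    by (intros k Hk; rewrite Hmeet, cycle_adj_iff by lia; lia).
  assert (Ma : seg_intersect (s 0) (s 1)) by (rewrite Hmeet, cycle_adj_iff by lia; lia).
  assert (Mb : seg_intersect (s 0) (s (m - 1))) by (rewrite Hmeet, cycle_adj_iff by lia; lia).
  assert (N : ~ seg_intersect (s 1) (s (m - 1))) by (rewrite Hmeet, cycle_adj_iff by lia; lia).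
  destruct (cut_interval_seg (s 0) (s 1) (s (m - 1)) h lo hi Hh Hlh DI
              (Hip 1 ltac:(lia)) (Hip (m - 1) ltac:(lia)) Ma Mb N)
    as [c1 [c2 [Ic1 [Ic2 [M12 [In1 [In2 [M1b [N1a [M2a N2b]]]]]]]]]].
  assert (C1 : forall k, S k < m -> seg_intersect c1 (s (S k)) <-> S k = m - 1).
  { intros k Hk. split; [|intros E; rewrite E; auto].
    intros H. destruct (Nat.eq_dec (S k) (m - 1)); auto. exfalso.
    destruct (Nat.eq_dec (S k) 1) as [E|E]; [rewrite E in H; auto|].
    apply (piece_no_meet c1 (s 0) (s (S k)) In1); auto. rewrite Hadj; lia. }
  assert (C2 : forall k, S k < m -> seg_intersect c2 (s (S k)) <-> S k = 1).
  { intros k Hk. split; [|intros E; rewrite E; auto].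
    intros H. destruct (Nat.eq_dec (S k) 1); auto. exfalso.
    destruct (Nat.eq_dec (S k) (m - 1)) as [E|E]; [rewrite E in H; auto|].
    apply (piece_no_meet c2 (s 0) (s (S k)) In2); auto. rewrite Hadj; lia. }
  exists (fun j => match j with 0 => c1 | 1 => c2 | S (S k) => s (S k) end).
  split; [split|split; [auto|split; [auto|reflexivity]]].
  - intros [|[|k]] Hk; [left; auto|left; auto|]. apply Hip. lia.
  - intros [|[|i]] [|[|j]] Hi Hj Hij; try lia; rewrite ?cycle_adj_iff by lia.
    + split; auto; lia.
    + rewrite C1 by lia. lia.
    + rewrite seg_intersect_comm. split; auto; lia.
    + rewrite C2 by lia. lia.
    + rewrite seg_intersect_comm, C1 by lia. lia.
    + rewrite seg_intersect_comm, C2 by lia. lia.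
    + rewrite Hmeet, cycle_adj_iff by lia. lia.
Qed.

(** For
    the triangle, whose arc must then have length 1, C_4 is given explicitly. *)
Lemma expand_first (m : nat) (s : nat -> segment) : 3 <= m -> ipseg_rep m s ->
  interval_seg (s 0) -> ~ interval_seg (s (m - 1)) -> (m = 3 -> ~ interval_seg (s 1)) ->
  exists s', ipseg_rep (S m) s' /\ interval_seg (s' 0) /\
    forall j, j < m -> (interval_seg (s' (S j)) <-> interval_seg (s j)).
Proof.
  intros Hm Hrep I0 Nlast N1.
  destruct (Nat.eq_dec m 3) as [E|E].
  - subst m. exists c4. destruct c4_interval as [C0 C1].
    destruct c4_permutation as [C2 C3].
    split; [apply c4_rep|split; [auto|]].
    intros [|[|[|j]]] Hj; try lia; simpl.
    + tauto.
    + split; intros H; [apply permutation_not_interval in H|apply N1 in H]; tauto.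
    + split; intros H; [apply permutation_not_interval in H|apply Nlast in H]; tauto.
  - destruct (cut_first m s ltac:(lia) Hrep I0) as [s' [Hrep' [I0' [I1' Es']]]].
    exists s'. split; [auto|split; [auto|]].
    intros [|j] Hj; [tauto|]. rewrite Es'. reflexivity.
Qed.

(* Once the last segment of a representation is not an interval, no interval
   arc wraps around, so the multiset of arc lengths can be read off the
   boolean interval pattern of the segments, scanned from left to right. *)

Definition is_interval (x : segment) : bool :=
  if excluded_middle_informative (interval_seg x) then true else false.

Lemma is_interval_true (x : segment) : is_interval x = true <-> interval_seg x.
Proof.
  unfold is_interval. destruct (excluded_middle_informative _); split; congruence || tauto.
Qed.

Lemma is_interval_false (x : segment) : is_interval x = false <-> ~ interval_seg x.
Proof.
  unfold is_interval. destruct (excluded_middle_informative _); split; congruence || tauto.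
Qed.

Lemma is_interval_iff (x y : segment) :
  (interval_seg x <-> interval_seg y) -> is_interval x = is_interval y.
Proof.
  intros H. unfold is_interval.
  destruct (excluded_middle_informative (interval_seg x)),
           (excluded_middle_informative (interval_seg y)); tauto.
Qed.

Definition pattern (s : nat -> segment) (j : nat) : bool := is_interval (s j).

Fixpoint run_length (f : nat -> bool) (i fuel : nat) : nat :=
  match fuel with
  | 0 => 0
  | S fuel' => if f i then S (run_length f (S i) fuel') else 0
  end.

Definition run_start (f : nat -> bool) (i : nat) : bool :=
  f i && match i with 0 => true | S i' => negb (f i') end.

Definition run_lengths (f : nat -> bool) (M : nat) : list nat :=
  map (fun i => run_length f i (M - i)) (filter (run_start f) (seq 0 M)).

Lemma run_length_spec (f : nat -> bool) (M : nat) : f (M - 1) = false ->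
  forall fuel i, i < M -> i + fuel = M ->
  (forall j, j < run_length f i fuel -> f (i + j) = true) /\
  i + run_length f i fuel < M /\ f (i + run_length f i fuel) = false.
Proof.
  intros HM fuel. induction fuel as [|fuel IH]; intros i Hi Hf; [lia|]. simpl.
  destruct (f i) eqn:Fi.
  - assert (Hi' : S i < M) by (destruct (Nat.eq_dec i (M - 1)); [congruence|lia]).
    destruct (IH (S i) Hi' ltac:(lia)) as [A [B C]].
    split; [|split; [lia|rewrite <- Nat.add_succ_comm; auto]].
    intros [|j] Hj; [rewrite Nat.add_0_r; auto|].
    rewrite <- Nat.add_succ_comm. apply A. lia.
  - rewrite Nat.add_0_r. split; [intros; lia|auto].
Qed.

Lemma arc_length_unique (M : nat) (s : nat -> segment) (i k k' : nat) :
  arc_length M s i k -> arc_length M s i k' -> k = k'.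
Proof.
  intros [A1 A2] [B1 B2].
  destruct (Nat.lt_trichotomy k k') as [lt|[eq|gt]]; auto.
  - exfalso. apply A2, B1, lt.
  - exfalso. apply B2, A1, gt.
Qed.

Lemma arc_length_run (M : nat) (s : nat -> segment) (i : nat) :
  ~ interval_seg (s (M - 1)) -> i < M -> arc_length M s i (run_length (pattern s) i (M - i)).
Proof.
  intros HM Hi.
  destruct (run_length_spec (pattern s) M (proj2 (is_interval_false _) HM) (M - i) i Hi
              ltac:(lia)) as [A [B C]].
  split.
  - intros j Hj. rewrite Nat.mod_small by lia. apply is_interval_true, A, Hj.
  - rewrite Nat.mod_small by lia. apply is_interval_false, C.
Qed.

Lemma arc_start_run_start (M : nat) (s : nat -> segment) (i : nat) :
  1 <= M -> ~ interval_seg (s (M - 1)) ->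
  arc_start M s i <-> In i (filter (run_start (pattern s)) (seq 0 M)).
Proof.
  intros HM HL. rewrite filter_In, in_seq. unfold arc_start, run_start, pattern.
  destruct i as [|i].
  - rewrite Nat.add_0_l, Nat.mod_small, Bool.andb_true_r, is_interval_true by lia.
    split; intros [A B]; [split; [lia|tauto]|split; [lia|auto]].
  - replace (S i + M - 1) with (i + 1 * M) by lia. rewrite Nat.Div0.mod_add.
    rewrite Bool.andb_true_iff, Bool.negb_true_iff, is_interval_true, is_interval_false.
    split.
    + intros [H1 [H2 H3]]. rewrite Nat.mod_small in H3 by lia. split; [lia|auto].
    + intros [H1 [H2 H3]]. rewrite Nat.mod_small by lia. split; [lia|auto].
Qed.

Lemma Forall2_graph {A B : Type} (R : A -> B -> Prop) (g : A -> B) (l1 : list A) (l2 : list B) :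
  (forall x y, In x l1 -> R x y -> y = g x) -> Forall2 R l1 l2 -> l2 = map g l1.
Proof.
  intros Hg H. induction H as [|x y l1 l2 Hxy H IH]; simpl; auto.
  f_equal; [apply Hg; simpl; auto|]. apply IH. intros; apply Hg; simpl; auto.
Qed.

Lemma Forall2_map_r {A B : Type} (R : A -> B -> Prop) (g : A -> B) (l : list A) :
  (forall x, In x l -> R x (g x)) -> Forall2 R l (map g l).
Proof.
  induction l as [|x l IH]; intros H; simpl; constructor.
  - apply H; simpl; auto.
  - apply IH. intros; apply H; simpl; auto.
Qed.

Lemma interval_arcs_run_lengths (M : nat) (s : nat -> segment) (ls : list nat) :
  1 <= M -> ~ interval_seg (s (M - 1)) ->
  interval_arcs M s ls <-> mixed_rep M s /\ Permutation (run_lengths (pattern s) M) ls.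
Proof.
  intros HM HL.
  set (F := filter (run_start (pattern s)) (seq 0 M)).
  set (g := fun i => run_length (pattern s) i (M - i)).
  assert (HF : forall x, In x F -> x < M)
    by (intros x Hx; unfold F in Hx; rewrite filter_In, in_seq in Hx; lia).
  split.
  - intros [Hmix [st [ln [Hnd [Hin [Hlen HP]]]]]]. split; auto.
    assert (Pst : Permutation st F).
    { apply NoDup_Permutation; auto; [apply NoDup_filter, seq_NoDup|].
      intros x. rewrite Hin. apply arc_start_run_start; auto. }
    assert (Eln : ln = map g st).
    { apply (Forall2_graph (arc_length M s) g st ln); auto. intros x y Hx Hxy.
      apply (arc_length_unique M s x); auto. apply arc_length_run; auto.
      apply Hin in Hx. destruct Hx; auto. }
    subst ln. eapply Permutation_trans; [|exact HP].
    apply Permutation_map, Permutation_sym, Pst.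
  - intros [Hmix HP]. split; auto. exists F, (map g F).
    split; [apply NoDup_filter, seq_NoDup|split; [|split; [|exact HP]]].
    + intros x. symmetry. apply arc_start_run_start; auto.
    + apply Forall2_map_r. intros x Hx. apply arc_length_run; auto.
Qed.

Lemma run_length_shift (Q P : nat -> bool) (m : nat) : (forall j, j < m -> Q (S j) = P j) ->
  forall fuel i, i + fuel <= m -> run_length Q (S i) fuel = run_length P i fuel.
Proof.
  intros H fuel. induction fuel as [|fuel IH]; intros i Hi; simpl; auto.
  rewrite H by lia. destruct (P i); auto. f_equal. apply IH. lia.
Qed.

Lemma run_length_succ (Q P : nat -> bool) (m : nat) : Q 0 = true ->
  (forall j, j < m -> Q (S j) = P j) -> run_length Q 0 (S m) = S (run_length P 0 m).
Proof. intros HQ H. simpl. rewrite HQ. f_equal. apply (run_length_shift Q P m H). lia. Qed.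

Lemma filter_map_S (g : nat -> bool) (l : list nat) :
  filter g (map S l) = map S (filter (fun x => g (S x)) l).
Proof. induction l as [|x l IH]; simpl; auto. destruct (g (S x)); simpl; rewrite IH; auto. Qed.

Lemma run_lengths_shift (Q P : nat -> bool) (m : nat) : 1 <= m -> Q 0 = true -> P 0 = true ->
  (forall j, j < m -> Q (S j) = P j) ->
  exists tl, run_lengths Q (S m) = S (run_length P 0 m) :: tl /\
             run_lengths P m = run_length P 0 m :: tl.
Proof.
  intros Hm HQ HP H. destruct m as [|m]; [lia|].
  exists (map (fun i => run_length P i (S m - i)) (filter (run_start P) (seq 1 m))).
  unfold run_lengths.
  change (seq 0 (S (S m))) with (0 :: 1 :: seq 2 m). change (seq 0 (S m)) with (0 :: seq 1 m).
  assert (S0 : run_start Q 0 = true) by (unfold run_start; rewrite HQ; auto).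
  assert (S1 : run_start Q 1 = false)
    by (unfold run_start; rewrite HQ; apply Bool.andb_false_r).
  assert (P0 : run_start P 0 = true) by (unfold run_start; rewrite HP; auto).
  simpl filter. rewrite S0, S1, P0. cbn [map]. rewrite !Nat.sub_0_r.
  split; [|reflexivity]. f_equal.
  - apply run_length_succ; auto.
  - rewrite <- seq_shift, filter_map_S, map_map.
    rewrite (filter_ext_in _ (run_start P)).
    + apply map_ext_in. intros a Ha. rewrite filter_In, in_seq in Ha.
      replace (S (S m) - S a) with (S m - a) by lia.
      apply (run_length_shift Q P (S m)); auto. lia.
    + intros [|a] Ha; rewrite in_seq in Ha; [lia|].
      unfold run_start. rewrite !H by lia. reflexivity.
Qed.

Definition rotate (M i : nat) (s : nat -> segment) : nat -> segment :=
  fun j => s ((j + i) mod M).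

Lemma addmod_cases (M i j : nat) : i < M -> j < M ->
  (j + i) mod M = if j + i <? M then j + i else j + i - M.
Proof.
  intros Hi Hj. destruct (Nat.ltb_spec (j + i) M).
  - apply Nat.mod_small; auto.
  - replace (j + i) with ((j + i - M) + 1 * M) at 1 by lia.
    rewrite Nat.Div0.mod_add. apply Nat.mod_small; lia.
Qed.

Lemma rotate_rep (M i : nat) (s : nat -> segment) :
  i < M -> ipseg_rep M s -> ipseg_rep M (rotate M i s).
Proof.
  intros Hi [Hip Hmeet]. unfold rotate. split.
  - intros j Hj. apply Hip, Nat.mod_upper_bound. lia.
  - intros j1 j2 H1 H2 Hne.
    rewrite !addmod_cases by auto.
    destruct (Nat.ltb_spec (j1 + i) M), (Nat.ltb_spec (j2 + i) M);
      rewrite Hmeet, !cycle_adj_iff by lia; lia.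
Qed.

Lemma arc_length_mod (M : nat) (s : nat -> segment) (x k : nat) :
  arc_length M s (x mod M) k <-> arc_length M s x k.
Proof. unfold arc_length. setoid_rewrite Nat.Div0.add_mod_idemp_l. tauto. Qed.

Lemma arc_length_rotate (M i : nat) (s : nat -> segment) (j k : nat) :
  arc_length M (rotate M i s) j k <-> arc_length M s (j + i) k.
Proof.
  unfold arc_length, rotate.
  assert (E : forall l, ((j + l) mod M + i) mod M = (j + i + l) mod M)
    by (intros l; rewrite Nat.Div0.add_mod_idemp_l; f_equal; lia).
  setoid_rewrite E. tauto.
Qed.

Lemma arc_start_rotate (M i : nat) (s : nat -> segment) (j : nat) : 1 <= M -> j < M ->
  arc_start M (rotate M i s) j <-> arc_start M s ((j + i) mod M).
Proof.
  intros HM Hj. unfold arc_start, rotate.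
  assert (E : ((j + M - 1) mod M + i) mod M = ((j + i) mod M + M - 1) mod M).
  { replace ((j + i) mod M + M - 1) with ((j + i) mod M + (M - 1)) by lia.
    rewrite !Nat.Div0.add_mod_idemp_l. f_equal. lia. }
  rewrite E. pose proof (Nat.mod_upper_bound (j + i) M ltac:(lia)). tauto.
Qed.

Lemma Forall2_map_l {A B : Type} (R : A -> B -> Prop) (f : A -> A) (l1 : list A) (l2 : list B) :
  Forall2 (fun x y => R (f x) y) l1 l2 -> Forall2 R (map f l1) l2.
Proof. intros H. induction H; simpl; constructor; auto. Qed.

Lemma Forall2_in_r {A B : Type} (R : A -> B -> Prop) (l1 : list A) (l2 : list B) (y : B) :
  Forall2 R l1 l2 -> In y l2 -> exists x, In x l1 /\ R x y.
Proof.
  intros H. induction H as [|x y' l1 l2 Hxy H IH]; simpl; intros Hy; [contradiction|].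
  destruct Hy as [E|Hy]; [subst; eauto|]. destruct (IH Hy) as [x' [? ?]]; eauto.
Qed.

(** Rotation preserves the interval arcs; the start x of an arc becomes
    (x + (M - i)) mod M. *)
Lemma rotate_arcs (M i : nat) (s : nat -> segment) (ls : list nat) :
  i < M -> interval_arcs M s ls -> interval_arcs M (rotate M i s) ls.
Proof.
  intros Hi [[[x [Hx Ix]] [y [Hy Py]]] [st [ln [Hnd [Hin [Hlen HP]]]]]].
  set (r := fun x => (x + (M - i)) mod M).
  assert (Hr : forall x, (r x + i) mod M = x mod M).
  { intros z. unfold r. rewrite Nat.Div0.add_mod_idemp_l.
    replace (z + (M - i) + i) with (z + 1 * M) by lia. apply Nat.Div0.mod_add. }
  assert (Hrx : forall x, x < M -> rotate M i s (r x) = s x)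
    by (intros z Hz; unfold rotate; rewrite Hr, Nat.mod_small; auto).
  assert (Hst : forall x, In x st -> x < M) by (intros z Hz; apply Hin in Hz; apply Hz).
  split; [split|].
  - exists (r x). split; [apply Nat.mod_upper_bound; lia|]. rewrite Hrx; auto.
  - exists (r y). split; [apply Nat.mod_upper_bound; lia|]. rewrite Hrx; auto.
  - exists (map r st), ln. split; [|split; [|split; [|exact HP]]].
    + apply NoDup_map_NoDup_ForallPairs; [|exact Hnd]. intros a b Ha Hb E.
      rewrite <- (Nat.mod_small a M), <- (Nat.mod_small b M) by auto.
      rewrite <- (Hr a), <- (Hr b), E. reflexivity.
    + intros j. rewrite in_map_iff. split.
      * intros [z [E Hz]]. subst j.
        apply arc_start_rotate; [lia|apply Nat.mod_upper_bound; lia|].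
        rewrite Hr, Nat.mod_small by auto. apply Hin; auto.
      * intros H. assert (Hj : j < M) by apply H.
        apply arc_start_rotate in H; [|lia|auto]. exists ((j + i) mod M). split.
        -- unfold r. rewrite Nat.Div0.add_mod_idemp_l.
           replace (j + i + (M - i)) with (j + 1 * M) by lia.
           rewrite Nat.Div0.mod_add. apply Nat.mod_small; auto.
        -- apply Hin; auto.
    + apply Forall2_map_l. eapply Forall2_impl; [|exact Hlen].
      intros a k Hak. apply arc_length_rotate.
      rewrite <- arc_length_mod, Hr, arc_length_mod. exact Hak.
Qed.

Lemma rotate_arc_to_front (M L : nat) (ls : list nat) :
  has_rep_with_arcs M ls -> In L ls ->
  exists s, ipseg_rep M s /\ interval_arcs M s ls /\
    interval_seg (s 0) /\ ~ interval_seg (s (M - 1)) /\ arc_length M s 0 L.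
Proof.
  intros [s [Hrep Harcs]] HL.
  pose proof Harcs as [[[x [Hx _]] _] [st [ln [_ [Hin [Hlen HP]]]]]].
  destruct (Forall2_in_r _ _ _ L Hlen (Permutation_in _ (Permutation_sym HP) HL))
    as [i [Hi Hil]].
  destruct (proj1 (Hin i) Hi) as [HiM [I0 Nprev]].
  exists (rotate M i s). split; [apply rotate_rep; auto|split; [apply rotate_arcs; auto|]].
  unfold rotate. rewrite Nat.add_0_l, Nat.mod_small by auto.
  split; [auto|split].
  - replace (M - 1 + i) with (i + M - 1) by lia. auto.
  - apply arc_length_rotate. auto.
Qed.

Lemma mixed_of_ends (M : nat) (s : nat -> segment) : 1 <= M -> ipseg_rep M s ->
  interval_seg (s 0) -> ~ interval_seg (s (M - 1)) -> mixed_rep M s.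
Proof.
  intros HM [Hip _] I0 NL. split; [exists 0; split; [lia|auto]|].
  exists (M - 1). split; [lia|]. destruct (Hip (M - 1) ltac:(lia)); tauto.
Qed.

Lemma arcs_of_shifted_pattern (m : nat) (sQ sP : nat -> segment) :
  1 <= m -> ipseg_rep (S m) sQ -> ipseg_rep m sP ->
  interval_seg (sQ 0) -> interval_seg (sP 0) -> ~ interval_seg (sP (m - 1)) ->
  (forall j, j < m -> (interval_seg (sQ (S j)) <-> interval_seg (sP j))) ->
  exists k, arc_length m sP 0 k /\ arc_length (S m) sQ 0 (S k) /\
    forall rest, interval_arcs (S m) sQ (S k :: rest) <-> interval_arcs m sP (k :: rest).
Proof.
  intros Hm RQ RP IQ0 IP0 NP HQP.
  assert (NQ : ~ interval_seg (sQ (S m - 1)))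
    by (replace (S m - 1) with (S (m - 1)) by lia; rewrite HQP by lia; auto).
  assert (Hpat : forall j, j < m -> pattern sQ (S j) = pattern sP j)
    by (intros j Hj; apply is_interval_iff, HQP, Hj).
  assert (Q0 : pattern sQ 0 = true) by apply is_interval_true, IQ0.
  assert (P0 : pattern sP 0 = true) by apply is_interval_true, IP0.
  destruct (run_lengths_shift _ _ m Hm Q0 P0 Hpat) as [tl [EQ EP]].
  exists (run_length (pattern sP) 0 m). split; [|split].
  - pose proof (arc_length_run m sP 0 NP ltac:(lia)) as A. rewrite Nat.sub_0_r in A. exact A.
  - pose proof (arc_length_run (S m) sQ 0 NQ ltac:(lia)) as A.
    rewrite Nat.sub_0_r, (run_length_succ _ (pattern sP) m Q0 Hpat) in A. exact A.
  - intros rest. rewrite !interval_arcs_run_lengths, EQ, EP by (auto; lia).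
    pose proof (mixed_of_ends (S m) sQ ltac:(lia) RQ IQ0 NQ).
    pose proof (mixed_of_ends m sP Hm RP IP0 NP).
    split; intros [_ HPm]; split; auto;
      [apply perm_skip, (Permutation_cons_inv HPm) | apply perm_skip, (Permutation_cons_inv HPm)].
Qed.

(** For the triangle the expansion is only available for arcs of
    length 1, the case covered by the explicit C_4. *)
Lemma shorten_arc (m l : nat) (rest : list nat) : 3 <= m -> (m = 3 -> l = 0) ->
  has_rep_with_arcs (S m) (S (S l) :: rest) <-> has_rep_with_arcs m (S l :: rest).
Proof.
  intros Hm H3. split.
  - intros H.
    destruct (rotate_arc_to_front (S m) (S (S l)) _ H (in_eq _ _))
      as [s [Hrep [Harcs [I0 [NL Hlen]]]]].
    assert (I1 : interval_seg (s 1)).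
    { destruct Hlen as [A _]. specialize (A 1 ltac:(lia)).
      rewrite Nat.mod_small in A by lia. exact A. }
    destruct (merge_first_two m s Hm Hrep I0 I1) as [s' [Hrep' [I0' Es']]].
    assert (NL' : ~ interval_seg (s' (m - 1))).
    { replace (m - 1) with (S (m - 2)) by lia. rewrite Es'.
      replace (S (S (m - 2))) with (S m - 1) by lia. exact NL. }
    destruct (arcs_of_shifted_pattern m s s' ltac:(lia) Hrep Hrep' I0 I0' NL')
      as [k [_ [Hk Hiff]]].
    { intros [|j] Hj; [tauto|]. rewrite Es'. reflexivity. }
    pose proof (arc_length_unique _ _ _ _ _ Hk Hlen) as E. injection E as ->.
    exists s'. split; [exact Hrep'|]. apply Hiff, Harcs.
  - intros H.
    destruct (rotate_arc_to_front m (S l) _ H (in_eq _ _))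
      as [s [Hrep [Harcs [I0 [NL Hlen]]]]].
    assert (N1 : m = 3 -> ~ interval_seg (s 1)).
    { intros E. destruct Hlen as [_ B]. rewrite (H3 E), Nat.mod_small in B by lia. exact B. }
    destruct (expand_first m s Hm Hrep I0 NL N1) as [s' [Hrep' [I0' Hpat]]].
    destruct (arcs_of_shifted_pattern m s' s ltac:(lia) Hrep' Hrep I0' I0 NL Hpat)
      as [k [Hk [_ Hiff]]].
    pose proof (arc_length_unique _ _ _ _ _ Hk Hlen) as ->.
    exists s'. split; [exact Hrep'|]. apply Hiff, Harcs.
Qed.

Lemma has_rep_with_arcs_perm (m : nat) (l1 l2 : list nat) :
  Permutation l1 l2 -> has_rep_with_arcs m l1 <-> has_rep_with_arcs m l2.
Proof.
  intros P. unfold has_rep_with_arcs, interval_arcs.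
  split; intros [s [Hr [Hm [st [ln [A [B [C D]]]]]]]]; exists s; split; auto; split; auto;
    exists st, ln; (split; [exact A|split; [exact B|split; [exact C|]]]).
  - exact (Permutation_trans D P).
  - exact (Permutation_trans D (Permutation_sym P)).
Qed.

Lemma n_prime_perm (l1 l2 : list nat) : Permutation l1 l2 -> n_prime l1 = n_prime l2.
Proof. intros P. induction P; simpl in *; lia. Qed.

Lemma n_prime_zero (ls : list nat) :
  Forall (fun l => 1 <= l) ls -> n_prime ls = 0 -> ls = repeat 1 (length ls).
Proof. intros H. induction H; simpl; auto. intros E. f_equal; [lia|]. apply IHForall. lia. Qed.

Lemma n_prime_pos (ls : list nat) : n_prime ls <> 0 ->
  exists l rest, Permutation ls (S (S l) :: rest).
Proof.
  induction ls as [|x ls IH]; simpl; intros H; [lia|].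
  destruct (Nat.lt_ge_cases x 2) as [Hx|Hx].
  - destruct IH as [l [rest P]]; [lia|]. exists l, (x :: rest).
    eapply Permutation_trans; [apply perm_skip, P|apply perm_swap].
  - exists (x - 2), ls. replace (S (S (x - 2))) with x by lia. reflexivity.
Qed.

Lemma shorten_all_arcs (k : nat) : forall (ls : list nat) (n : nat),
  n_prime ls = k -> Forall (fun l => 1 <= l) ls -> 3 + k <= n ->
  has_rep_with_arcs n ls <-> has_rep_with_arcs (n - k) (repeat 1 (length ls)).
Proof.
  induction k as [|k IH]; intros ls n Hk HF Hn.
  - rewrite Nat.sub_0_r, <- (n_prime_zero ls HF Hk). tauto.
  - destruct (n_prime_pos ls ltac:(lia)) as [l [rest P]].
    assert (Hk' : n_prime (S (S l) :: rest) = S k) by (rewrite <- (n_prime_perm _ _ P); auto).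
    simpl in Hk'.
    pose proof (Permutation_Forall P HF) as HF'. inversion HF' as [|? ? _ Hrest].
    destruct n as [|m]; [lia|].
    rewrite (has_rep_with_arcs_perm _ _ _ P), (Permutation_length P), shorten_arc by lia.
    rewrite (IH (S l :: rest) m); [|simpl; lia|constructor; [lia|exact Hrest]|lia].
    replace (S m - S k) with (m - k) by lia. reflexivity.
Qed.

Theorem mainTheorem4 (n t : nat) (ls : list nat) :
  (4 <= n)%nat -> (1 <= t)%nat -> length ls = t ->
  Forall (fun l => (1 <= l)%nat) ls ->
  (3 <= n - n_prime ls)%nat ->
  (has_rep_with_arcs n ls <->
   has_rep_with_arcs (n - n_prime ls) (repeat 1%nat t)).
Proof.
  intros Hn Ht Hl HF H3. subst t. apply shorten_all_arcs; auto. lia.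
Qed.
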